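(* Let $1\le d<n$ and $r\ge1$ be integers such that $$\left(1+d(n-d)+\binom{d}{2}\binom{n-d}{2}\right)r\le\binom{n}{d}.$$ Then the secant variety $\sigma_r(\mathcal{M}_{n,(1^d)})$ of the hypersimplex variety has the expected dimension $\min\{nr-1,\binom{n}{d}-1\}$, which here equals $nr-1$.
   Context: Work over $\mathbb{C}$. The variety $\mathcal{M}_{n,(1^d)}\subset\mathbb{P}^{\binom{n}{d}-1}$ is the toric variety of the hypersimplex $\Delta(n,d)=\mathrm{conv}\{e_{l_1}+\cdots+e_{l_d}:1\le l_1<\cdots<l_d\le n\}$. Concretely, it has coordinates $m_{i_1\cdots i_n}$ for $0/1$ vectors with exactly $d$ ones, and it is the Zariski closure of the image of $(\mu_{11},\ldots,\mu_{n1})\mapsto\bigl(\prod_{k:i_k=1}\mu_{k1}\bigr)$. It has dimension $n-1$. Its $r$-th secant variety $\sigma_r(\mathcal{M}_{n,(1^d)})$ is the Zariski closure of the image of $m_{i_1\cdots i_n}=\sum_{j=1}^r\prod_{k:i_k=1}\mu^{(j)}_{k1}$. Its expected dimension is $\min\{r(n-1)+r-1,\binom nd-1\}$. *)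

From mathcomp Require Import all_boot all_algebra.
From mathcomp Require Import Rstruct.
From mathcomp Require Import complex.
From mathcomp Require Import mpoly.

Set Implicit Arguments.
Unset Strict Implicit.
Unset Printing Implicit Defensive.
Import GRing.Theory.
Local Open Scope ring_scope.

Definition CC : closedFieldType := (Rdefinitions.R)[i].

Definition alg_indep (N k : nat) (g : k.-tuple {mpoly CC[N]}) : Prop :=
  forall P : {mpoly CC[k]}, P \mPo g = 0 -> P = 0.

(* Dimension (= transcendence degree over CC of the subalgebra generated by
   the F_i, i.e. the Krull dimension of the coordinate ring of the Zariski
   closure of the image of the polynomial map x |-> (F_i(x))_{i in I})
   of the affine variety parametrized by F : I -> {mpoly CC[N]}:
   the largest number of algebraically independent coordinate functions. *)
Definition image_closure_dim (N : nat) (I : finType) (F : I -> {mpoly CC[N]})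
    (e : nat) : Prop :=
  (exists g : e.-tuple {mpoly CC[N]},
      (forall i : 'I_e, exists c : I, tnth g i = F c) /\ alg_indep g) /\
  (forall (k : nat) (g : k.-tuple {mpoly CC[N]}),
      (forall i : 'I_k, exists c : I, tnth g i = F c) -> alg_indep g ->
      (k <= e)%N).

(* Parameters mu^{(j)}_{k1}, j < r, k < n, are the variables 'X_(mxvec_index j k) (index j*n+k)
   of {mpoly CC[r*n]}. *)
Definition mu (n r : nat) (j : 'I_r) (k : 'I_n) : {mpoly CC[r * n]} :=
  'X_(mxvec_index j k).

(* The index set of coordinates m_{i_1...i_n}: 0/1 vectors with exactly d
   ones, identified with their supports, the d-subsets of {0,...,n-1}. *)
Definition dsubset (n d : nat) := {S : {set 'I_n} | #|S| == d}.

(* Parametrization of the affine cone over sigma_r(M_{n,(1^d)}):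
   m_S = sum_{j<r} prod_{k in S} mu^{(j)}_{k1}. *)
Definition secant_param (n d r : nat) (S : dsubset n d) : {mpoly CC[r * n]} :=
  \sum_(j < r) \prod_(k in val S) mu j k.

(* dim sigma_r(M_{n,(1^d)}) = e  (projective dimension): the affine cone
   over it (closure of the image of secant_param) has dimension e + 1. *)
Definition secant_hypersimplex_dim (n d r e : nat) : Prop :=
  image_closure_dim (@secant_param n d r) e.+1.

(* Lower bound: a greedy code yields d-sets S_1, ..., S_r pairwise at Johnson distance at
   least 3, since a ball of radius 2 in J(n, d) has 1 + d(n-d) + C(d,2) C(n-d,2) points.
   Around each S_j take the n sets E_(j,k) reached from S_j by at most one exchange through
   fixed pivots a_j in S_j and b_j outside S_j; a nonnegative integer combination of their
   incidence vectors determines its coefficients. After a weighted monomial substitution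
   the leading monomial of m_(E_(j,k)) comes from the j-th summand alone, so the leading
   monomials of these nr coordinates are independent, and hence so are the coordinates.
   Upper bound: more than N polynomials in N variables are algebraically dependent, by
   counting monomials of bounded degree. *)

From mathcomp Require Import all_boot all_order all_algebra.
From mathcomp Require Import mpoly.
From mathcomp Require Import zify.

Set Implicit Arguments.
Unset Strict Implicit.
Unset Printing Implicit Defensive.

Import Order.TTheory GRing.Theory.

Section ExchangeSets.
Variables (n : nat) (X : {set 'I_n}) (a b : 'I_n).
Hypotheses (Xa : a \in X) (Xb : b \notin X).

Definition exchange_set (k : 'I_n) : {set 'I_n} :=
  if k \in X then (if k == a then X else b |: (X :\ k)) else k |: (X :\ a).

Lemma card_exchange_set k : #|exchange_set k| = #|X|.
Proof.
rewrite /exchange_set; case: ifP => Xk; [case: ifP => // _|].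
  by rewrite cardsU1 !inE (negbTE Xb) andbF (cardsD1 k X) Xk.
by rewrite cardsU1 !inE Xk andbF (cardsD1 a X) Xa.
Qed.

Lemma exchange_set_meet k : #|X| <= #|exchange_set k :&: X| + 1.
Proof.
suff [x sub_x] : exists x, X :\ x \subset exchange_set k :&: X.
  by rewrite (cardsD1 x X) addnC leq_add ?leq_b1 ?subset_leq_card.
rewrite /exchange_set; case: ifP => Xk; [case: ifP => ka|].
- by exists a; apply/subsetP => l; rewrite !inE => /andP[_ ->].
- by exists k; apply/subsetP => l; rewrite !inE => /andP[-> ->]; rewrite orbT.
- by exists a; apply/subsetP => l; rewrite !inE => /andP[-> ->]; rewrite orbT.
Qed.

Lemma mem_exchange_set_out l k : l \notin X -> l != b ->
  (l \in exchange_set k) = (k == l).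
Proof.
move=> Xl lb; rewrite /exchange_set; case: ifP => Xk; [case: ifP => _|]; rewrite ?inE.
- by rewrite (negbTE Xl); apply/esym/negbTE; apply: contraNneq Xl => <-.
- by rewrite (negbTE lb) (negbTE Xl) andbF; apply/esym/negbTE; apply: contraNneq Xl => <-.
- by rewrite (negbTE Xl) andbF orbF eq_sym.
Qed.

Lemma mem_exchange_set_in l k : l \in X -> l != a ->
  (l \in exchange_set k) = (k != l).
Proof.
move=> Xl la; rewrite /exchange_set; case: ifP => Xk; [case: ifP => /eqP ka|]; rewrite ?inE.
- by rewrite Xl ka eq_sym la.
- have lb : l != b by apply: contraNneq Xb => <-.
  by rewrite (negbTE lb) Xl andbT eq_sym.
- by rewrite la Xl orbT; apply/esym; apply: contraFneq Xk => ->.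
Qed.

Lemma mem_exchange_set_pivot k : (a \in exchange_set k) = (k \in X).
Proof.
rewrite /exchange_set; case: ifP => Xk; [case: ifP => ka|]; rewrite ?inE.
- by move/eqP: ka => <-.
- by rewrite Xa andbT [a == k]eq_sym ka orbT.
- by rewrite eqxx orbF; apply: contraFF Xk => /eqP <-.
Qed.

Definition exchange_weight (w : 'I_n -> nat) (l : 'I_n) : nat :=
  \sum_(k | l \in exchange_set k) w k.

Lemma sum_exchange_weight w : \sum_l exchange_weight w l = #|X| * \sum_k w k.
Proof.
rewrite (exchange_big_dep xpredT) //= big_distrr; apply: eq_bigr => k _.
by rewrite sum_nat_const card_exchange_set.
Qed.

Lemma exchange_weight_out w l : l \notin X -> l != b -> exchange_weight w l = w l.
Proof.
move=> Xl lb; rewrite /exchange_weight (eq_bigl (pred1 l)) ?big_pred1_eq // => k.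
exact: mem_exchange_set_out.
Qed.

Lemma exchange_weight_in w l : l \in X -> l != a ->
  exchange_weight w l + w l = \sum_k w k.
Proof.
move=> Xl la; rewrite [RHS](bigD1 l) //= addnC; congr (_ + _).
by apply: eq_bigl => k; rewrite mem_exchange_set_in.
Qed.

Lemma exchange_weight_pivot w : exchange_weight w a = \sum_(k in X) w k.
Proof. by apply: eq_bigl => k; rewrite mem_exchange_set_pivot. Qed.

Lemma exchange_weight_inj w w' : exchange_weight w =1 exchange_weight w' -> w =1 w'.
Proof.
move=> eq_w.
have eq_sum : \sum_k w k = \sum_k w' k.
  apply/eqP; rewrite -(@eqn_pmul2l #|X|) ?card_gt0; last by apply/set0Pn; exists a.
  by rewrite -!sum_exchange_weight; apply/eqP/eq_bigr => l _.
have eq_gen l : l != a -> l != b -> w l = w' l.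
  move=> la lb; have [Xl | Xl] := boolP (l \in X); last first.
    by rewrite -exchange_weight_out // eq_w exchange_weight_out.
  apply: (@addnI (exchange_weight w l)).
  by rewrite exchange_weight_in // eq_w eq_sum exchange_weight_in.
have eq_a : w a = w' a.
  have eq_rest : \sum_(k in X | k != a) w k = \sum_(k in X | k != a) w' k.
    apply: eq_bigr => k /andP[Xk ka]; apply: eq_gen => //.
    by apply: contraNneq Xb => <-.
  have := eq_w a; rewrite !exchange_weight_pivot (bigD1 a) // [RHS](bigD1 a) //=.
  by rewrite eq_rest => /addIn.
have eq_b : w b = w' b.
  have eq_rest : \sum_(l | l != b) w l = \sum_(l | l != b) w' l.
    apply: eq_bigr => l lb.
    by have [-> | la] := eqVneq l a; [exact: eq_a | exact: eq_gen].
  by move: eq_sum; rewrite (bigD1 b) // [RHS](bigD1 b) //= eq_rest => /addIn.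
move=> l; have [-> // | lb] := eqVneq l b; have [-> // | la] := eqVneq l a.
exact: eq_gen.
Qed.

End ExchangeSets.

Section JohnsonCode.
Variables n d : nat.

Definition johnson_ball (X : {set 'I_n}) : {set {set 'I_n}} :=
  [set T : {set 'I_n} | (#|T| == d) && (d <= #|T :&: X| + 2)].

Lemma card_johnson_ball (X : {set 'I_n}) : #|X| = d ->
  #|johnson_ball X| <= 1 + d * (n - d) + 'C(d, 2) * 'C(n - d, 2).
Proof.
move=> card_X.
pose draws (Y : {set 'I_n}) t := [set A : {set 'I_n} | (A \subset Y) && (#|A| == t)].
pose D t := setX (draws X t) (draws (~: X) t).
have card_D t : #|D t| = 'C(d, t) * 'C(n - d, t).
  by rewrite cardsX !cards_draws card_X cardsCs setCK card_X card_ord.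
(* T |-> (X :\: T, T :\: X) embeds the ball into pairs of t-subsets of X and of
   its complement with t <= 2. *)
pose f (T : {set 'I_n}) := (X :\: T, T :\: X).
have f_inj : injective f.
  apply: (@can_inj _ _ _ (fun p => (X :\: p.1) :|: p.2)) => T.
  by apply/setP => l; rewrite !inE; case: (l \in X); case: (l \in T).
rewrite -(card_imset _ f_inj).
apply: (@leq_trans #|D 0 :|: D 1 :|: D 2|); last first.
  apply: leq_trans (leq_card_setU _ _) _; rewrite -!card_D leq_add2r.
  by apply: leq_trans (leq_card_setU _ _) _; rewrite !card_D !bin0 !bin1 !muln1.
apply/subset_leq_card/subsetP => p /imsetP[T]; rewrite inE => /andP[/eqP card_T near_T] ->.
have : f T \in D (d - #|T :&: X|).
  rewrite !inE /= !cardsD card_T setIC card_X !eqxx !andbT subsetDl.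
  by apply/subsetP => l; rewrite !inE => /andP[->].
have : d - #|T :&: X| < 3 by lia.
by case: (d - _) => [|[|[|]]] // _; rewrite !inE => ->; rewrite ?orbT.
Qed.

Lemma johnson_code_seq r :
    (1 + d * (n - d) + 'C(d, 2) * 'C(n - d, 2)) * r <= 'C(n, d) ->
  exists s : seq {set 'I_n}, [/\ size s = r, all (fun T : {set 'I_n} => #|T| == d) s
    & pairwise (fun A B : {set 'I_n} => #|A :&: B| + 2 < d) s].
Proof.
set beta := 1 + _ + _; elim: r => [|r IH] le_code; first by exists [::].
have [s [size_s card_s far_s]] := IH (leq_trans (leq_mul (leqnn _) (leqnSn r)) le_code).
have card_near : #|\bigcup_(X <- s) johnson_ball X| <= r * beta.
  rewrite -size_s; elim: s card_s {IH size_s far_s} => [|X s' IHs].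
    by rewrite big_nil cards0.
  move=> /andP[/eqP card_X card_s']; rewrite big_cons mulSn.
  by apply: leq_trans (leq_card_setU _ _) _; rewrite leq_add ?card_johnson_ball ?IHs.
set near := \bigcup_(X <- s) _ in card_near.
have [T] : exists T, T \in [set T : {set 'I_n} | #|T| == d] :\: near.
  apply/set0Pn; apply: contraTneq le_code => /eqP; rewrite setD_eq0.
  move=> /subset_leq_card; rewrite card_draws card_ord -ltnNge => le_near.
  rewrite mulnSr [beta * r]mulnC (leq_ltn_trans le_near) // (leq_ltn_trans card_near) //.
  by rewrite -[X in X < _]addn0 ltn_add2l /beta addnAC.
rewrite !inE => /andP[T_far /eqP card_T].
exists (T :: s); split=> /=; [by rewrite size_s | by rewrite card_T eqxx card_s |].
rewrite far_s andbT; apply/allP => X Xs; rewrite ltnNge; apply: contra T_far => near_T.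
by rewrite /near bigcup_seq; apply/bigcupP; exists X; rewrite // inE card_T eqxx.
Qed.

Lemma johnson_code_exists r :
    (1 + d * (n - d) + 'C(d, 2) * 'C(n - d, 2)) * r <= 'C(n, d) ->
  exists S : 'I_r -> {set 'I_n},
    (forall j, #|S j| = d) /\ (forall j j', j != j' -> #|S j :&: S j'| + 2 < d).
Proof.
move/johnson_code_seq => [s [size_s card_s /(pairwiseP set0) far_s]].
exists (fun j => nth set0 s j); split=> [j | j j' ne_j].
  by apply/eqP/(all_nthP _ card_s); rewrite size_s.
have in_s (i : 'I_r) : (i : nat) \in gtn (size s) by rewrite unfold_in /= size_s.
have [lt_jj' | lt_j'j | eq_jj'] := ltngtP j j'.
- exact: far_s (in_s j) (in_s j') lt_jj'.
- by rewrite setIC; apply: far_s (in_s j') (in_s j) lt_j'j.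
- by move: ne_j; rewrite -val_eqE /= eq_jj' eqxx.
Qed.

End JohnsonCode.

Lemma card_setI_lt (T : finType) (R X Y : {set T}) :
    #|R| <= #|R :&: X| + 1 -> #|X :&: Y| + 2 < #|R| -> #|R :&: Y| < #|R :&: X|.
Proof.
move=> meet_RX far_XY; have := cardsUI (R :&: X) (R :&: Y).
have : #|(R :&: X) :|: (R :&: Y)| <= #|R|.
  by apply/subset_leq_card; rewrite -setIUr subsetIl.
have : #|(R :&: X) :&: (R :&: Y)| <= #|X :&: Y|.
  by apply/subset_leq_card/subsetP => x; rewrite !inE => /andP[/andP[_ ->] /andP[_ ->]].
lia.
Qed.

Local Open Scope ring_scope.

Lemma comp_mpolyA (R : comNzRingType) k N l (P : {mpoly R[k]})
    (g : k.-tuple {mpoly R[N]}) (h : N.-tuple {mpoly R[l]}) :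
  (P \mPo g) \mPo h = P \mPo [tuple tnth g i \mPo h | i < k].
Proof.
rewrite [P \mPo g]comp_mpolyE [RHS]comp_mpolyE raddf_sum /=; apply: eq_bigr => m _.
rewrite comp_mpolyZ rmorph_prod; congr (_ *: _); apply: eq_bigr => i _.
by rewrite rmorphXn /= tnth_mktuple.
Qed.

Section LeadingMonomials.
Variables (R : idomainType) (N : nat).

Lemma sum_uniq_mlead_neq0 (T : eqType) (s : seq T) (F : T -> {mpoly R[N]}) :
    s != [::] -> {in s, forall x, F x != 0} -> uniq [seq mlead (F x) | x <- s] ->
  \sum_(x <- s) F x != 0 /\ mlead (\sum_(x <- s) F x) \in [seq mlead (F x) | x <- s].
Proof.
elim: s => // x s IH _ nzF /= /andP[xs us]; rewrite big_cons.
have [-> | s0] := eqVneq s [::].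
  by rewrite big_nil addr0 mem_seq1 eqxx nzF ?mem_head.
have [nz_s lead_s] := IH s0 (fun y ys => nzF y (@mem_behead _ (x :: s) _ ys)) us.
have ne : mlead (F x) != mlead (\sum_(y <- s) F y) by apply: contraNneq xs => ->.
split.
  by apply: contra ne; rewrite addr_eq0 => /eqP ->; rewrite mleadN.
by rewrite mleadD // inE; case: leP => _; rewrite ?lead_s ?orbT ?eqxx.
Qed.

Lemma mlead_alg_indep k (G : k.-tuple {mpoly R[N]}) :
    (forall i, tnth G i != 0) ->
    injective (fun m : 'X_{1..k} => (\sum_(i < k) mlead (tnth G i) *+ m i)%MM) ->
  forall P : {mpoly R[k]}, P \mPo G = 0 -> P = 0.
Proof.
move=> nzG injL P; apply: contra_eq => nzP; rewrite comp_mpolyE.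
have nz_term m : m \in msupp P -> P@_m *: \prod_(i < k) tnth G i ^+ m i != 0.
  rewrite mcoeff_msupp -mul_mpolyC => nz_c.
  by rewrite mulf_neq0 ?mpolyC_eq0 //; apply/prodf_neq0 => i _; rewrite expf_neq0.
have lead_term m : m \in msupp P ->
    mlead (P@_m *: \prod_(i < k) tnth G i ^+ m i) = (\sum_(i < k) mlead (tnth G i) *+ m i)%MM.
  rewrite mcoeff_msupp => nz_c; rewrite mleadZ // mlead_prod => [|i _ _]; last first.
    by rewrite expf_neq0.
  by apply: eq_bigr => i _; rewrite mleadX.
have nz_supp : msupp P != [::] by rewrite msupp_eq0.
have uniq_lead : uniq [seq mlead (P@_m *: \prod_(i < k) tnth G i ^+ m i) | m <- msupp P].
  by rewrite ((eq_in_map _ _ _).1 lead_term) (map_inj_uniq injL) msupp_uniq.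
exact: (sum_uniq_mlead_neq0 nz_supp nz_term uniq_lead).1.
Qed.

Lemma comp_mlead_alg_indep k M (g : k.-tuple {mpoly R[M]}) (h : M.-tuple {mpoly R[N]}) :
    (forall i, tnth g i \mPo h != 0) ->
    injective (fun m : 'X_{1..k} => (\sum_(i < k) mlead (tnth g i \mPo h) *+ m i)%MM) ->
  forall P : {mpoly R[k]}, P \mPo g = 0 -> P = 0.
Proof.
move=> nz_gh inj_gh P /(congr1 (comp_mpoly h)); rewrite comp_mpolyA comp_mpoly0.
apply: mlead_alg_indep => [i | ]; first by rewrite tnth_mktuple.
by apply: (eq_inj inj_gh) => m; apply: eq_bigr => i _; rewrite tnth_mktuple.
Qed.

Lemma mlead_sumX_max (I : finType) (e : I -> 'X_{1..N}) i0 :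
    (forall i, i != i0 -> (e i < e i0)%O) ->
  mlead (\sum_i 'X_[e i] : {mpoly R[N]}) = e i0 /\ (\sum_i 'X_[e i] : {mpoly R[N]}) != 0.
Proof.
move=> lt_e; rewrite (bigD1 i0) //=; set rest := \sum_(i | i != i0) _.
have small_rest : (rest == 0) || (mlead rest < e i0)%O.
  rewrite /rest; elim/big_ind: _ => [|p q|i /lt_e lt_ei]; rewrite ?eqxx ?mleadXm ?lt_ei ?orbT //.
  case/orP=> [/eqP-> | ltp]; first by rewrite add0r.
  case/orP=> [/eqP-> | ltq]; first by rewrite addr0 ltp orbT.
  by rewrite (le_lt_trans (mleadD_le p q)) ?orbT // ltUx ltp.
have coef_rest : rest@_(e i0) = 0.
  by case/orP: small_rest => [/eqP-> | /mcoeff_gt_mlead]; rewrite ?mcoeff0.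
have lead : mlead ('X_[e i0] + rest) = e i0.
  by case/orP: small_rest => [/eqP-> | lt]; rewrite ?addr0 ?mleadDl mleadXm.
split=> //; apply/eqP => /(congr1 (mcoeff (e i0))).
by rewrite mcoeffD mcoeffX eqxx coef_rest mcoeff0 addr0 => /eqP; rewrite oner_eq0.
Qed.

End LeadingMonomials.

Section DependenceCount.
Variable K : fieldType.

Lemma wide_mx_kernel m p (M : 'M[K]_(m, p)) :
  (p < m)%N -> exists2 v : 'rV_m, v != 0 & v *m M = 0.
Proof.
move=> ltpm; have /rowV0Pn[v /sub_kermxP vM nz_v] : kermx M != 0.
  rewrite kermx_eq0 /row_free; apply: contraTN ltpm => /eqP <-.
  by rewrite -leqNgt rank_leq_col.
by exists v.
Qed.

Lemma mcoeff_comp_mpolyX_eq0 N k (g : k.-tuple {mpoly K[N]}) (m : 'X_{1..k}) mu :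
    (\sum_(i < k) m i * mdeg (mlead (tnth g i)) < mdeg mu)%N ->
  ('X_[m] \mPo g)@_mu = 0.
Proof.
move=> lt_mu; apply/eqP; rewrite -[_ == 0]negbK -mcoeff_msupp; apply: contraTN lt_mu.
move=> /msupp_le_mlead /lemc_mdeg le_mu; rewrite -leqNgt (leq_trans le_mu) //.
rewrite comp_mpolyX; apply: leq_trans (lemc_mdeg (mlead_prod_le _ _ _)) _.
rewrite mdeg_sum leq_sum // => i _.
by rewrite mulnC -mdegMn lemc_mdeg ?mleadX_le.
Qed.

Lemma sum_mpolyX_neq0 (A : finType) k (mA : A -> 'X_{1..k}) (c : A -> K) a0 :
  injective mA -> c a0 != 0 -> \sum_a c a *: 'X_[mA a] != 0.
Proof.
move=> mA_inj nz_c; apply: contraNneq nz_c => /(congr1 (mcoeff (mA a0))).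
rewrite raddf_sum (bigD1 a0) //= big1 => [|a ne_a].
  by rewrite mcoeffZ mcoeffX eqxx mulr1 addr0 mcoeff0 => ->.
by rewrite mcoeffZ mcoeffX (inj_eq mA_inj) (negbTE ne_a) mulr0.
Qed.

Lemma exp_box_lt D N k : (N < k)%N ->
  ((D.+1 ^ N * D).+1 ^ N < (D.+1 ^ N).+1 ^ k)%N.
Proof.
move=> ltNk; set q := (D.+1 ^ N)%N.
have leq_exp e x y : (x <= y -> x ^ e <= y ^ e)%N.
  by move=> le_xy; elim: e => // e IH; rewrite !expnS leq_mul.
have q_gt0 : (0 < q)%N by rewrite expn_gt0.
apply: (@leq_ltn_trans ((q * D.+1) ^ N)); first by apply: leq_exp; rewrite mulnS; lia.
by rewrite expnMn -expnSr (leq_trans _ (leq_pexp2l _ ltNk)) // ltn_exp2r.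
Qed.

Lemma alg_dep_of_lt N k (g : k.-tuple {mpoly K[N]}) :
  (N < k)%N -> exists2 P : {mpoly K[k]}, P != 0 & P \mPo g = 0.
Proof.
move=> ltNk.
(* The (q+1)^k products of powers g^a, a <= q, are supported in the box of exponents
   at most qD, which has fewer points: a linear relation among them gives P. *)
pose D := (\sum_(i < k) mdeg (mlead (tnth g i)))%N.
pose q := (D.+1 ^ N)%N.
pose A := {ffun 'I_k -> 'I_q.+1}.
pose B := {ffun 'I_N -> 'I_(q * D).+1}.
pose mA (a : A) : 'X_{1..k} := [multinom (a i : nat) | i < k].
pose mB (b : B) : 'X_{1..N} := [multinom (b i : nat) | i < N].
pose G (a : A) := 'X_[mA a] \mPo g.
pose M := \matrix_(i < #|A|, j < #|B|) (G (enum_val i))@_(mB (enum_val j)).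
have [v nz_v vM] : exists2 v : 'rV_#|A|, v != 0 & v *m M = 0.
  by apply: wide_mx_kernel; rewrite !card_ffun !card_ord exp_box_lt.
exists (\sum_(a : A) v 0 (enum_rank a) *: 'X_[mA a]).
  have [i nz_vi] : exists i, v 0 i != 0.
    apply/existsP; apply: contraNT nz_v => /existsPn v0.
    by apply/eqP/rowP => i; rewrite mxE; apply/eqP/negPn/v0.
  apply: (sum_mpolyX_neq0 (a0 := enum_val i)); last by rewrite enum_valK.
  move=> a a' /mnmP eq_a; apply/ffunP => i'; apply/val_inj.
  by have := eq_a i'; rewrite !mnmE.
rewrite raddf_sum; apply/mpolyP => mu; rewrite raddf_sum mcoeff0 /=.
under eq_bigr do rewrite comp_mpolyZ mcoeffZ -/(G _).
have [small | /forallPn[i]] := boolP [forall i, (mu i <= q * D)%N].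
  pose b : B := [ffun i => inord (mu i)].
  have -> : mu = mB b.
    by apply/mnmP => i; rewrite mnmE ffunE inordK // ltnS (forallP small i).
  have := congr1 (fun w : 'rV_#|B| => w 0 (enum_rank b)) vM; rewrite /= !mxE => vMb.
  rewrite -[RHS]vMb (reindex _ (onW_bij _ (enum_val_bij A))) /=.
  by apply: eq_bigr => i _; rewrite enum_valK mxE enum_rankK.
rewrite -ltnNge => big_mu; rewrite big1 // => a _.
have le_deg : (\sum_(i < k) mA a i * mdeg (mlead (tnth g i)) <= q * D)%N.
  by rewrite big_distrr leq_sum // => j _; rewrite mnmE leq_mul2r -ltnS ltn_ord orbT.
have le_mu : (mu i <= mdeg mu)%N by rewrite mdegE (bigD1 i) //= leq_addr.
by rewrite mcoeff_comp_mpolyX_eq0 ?mulr0 // (leq_ltn_trans le_deg (leq_trans big_mu le_mu)).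
Qed.

End DependenceCount.

Lemma alg_indep_size_le N k (g : k.-tuple {mpoly CC[N]}) : alg_indep g -> (k <= N)%N.
Proof.
move=> indep_g; rewrite leqNgt; apply/negP => /(alg_dep_of_lt g)[P nz_P Pg].
by rewrite (indep_g P Pg) eqxx in nz_P.
Qed.

Definition mxvec_fun (T : Type) m p (f : 'I_m -> 'I_p -> T) (i : 'I_(m * p)) : T :=
  mxvec (\matrix_(j, k) f j k) 0 i.

Lemma mxvec_funE T m p (f : 'I_m -> 'I_p -> T) j k : mxvec_fun f (mxvec_index j k) = f j k.
Proof. by rewrite /mxvec_fun mxvecE mxE. Qed.

Lemma eq_mxvec_index m p (j j' : 'I_m) (k k' : 'I_p) :
  (mxvec_index j k == mxvec_index j' k') = (j == j') && (k == k').
Proof. by rewrite (inj_eq (@cast_ord_inj _ _ _)) (inj_eq enum_rank_inj). Qed.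

Lemma big_mxvec_index (R : Type) (idx : R) (op : Monoid.com_law idx) m p
    (F : 'I_(m * p) -> R) :
  \big[op/idx]_(i < m * p) F i =
  \big[op/idx]_(j < m) \big[op/idx]_(k < p) F (mxvec_index j k).
Proof.
by rewrite pair_big (reindex _ (curry_mxvec_bij m p)); apply: eq_bigr => -[].
Qed.

Section SecantSpecialization.
Variables (n d r : nat) (S : 'I_r -> {set 'I_n}) (a b : 'I_r -> 'I_n).
Hypotheses (card_S : forall j, #|S j| = d)
  (far_S : forall j j', j != j' -> (#|S j :&: S j'| + 2 < d)%N)
  (Sa : forall j, a j \in S j) (Sb : forall j, b j \notin S j).

Let E j := exchange_set (S j) (a j) (b j).

Lemma card_E j k : #|E j k| == d.
Proof. by rewrite card_exchange_set //; apply/eqP. Qed.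

Definition exchange_dsubset j k : dsubset n d := exist _ (E j k) (card_E j k).

(* With mu^(j)_l weighted by 1 + [l \in S j], the j-th summand of m_T has total degree
   #|T| + #|T :&: S j|; for T = E j k this beats every other summand since the S j are far
   apart. *)
Let weight j l := (1 + (l \in S j))%N.

Definition weight_subst : (r * n).-tuple {mpoly CC[r * n]} :=
  [tuple 'X_i ^+ mxvec_fun weight i | i < r * n].

Definition weight_mnm j (T : {set 'I_n}) : 'X_{1..r * n} :=
  (\sum_(l in T) U_(mxvec_index j l) *+ weight j l)%MM.

Lemma comp_secant_param (T : dsubset n d) :
  secant_param r T \mPo weight_subst = \sum_j 'X_[weight_mnm j (val T)].
Proof.
rewrite /secant_param raddf_sum; apply: eq_bigr => j _ /=.
rewrite rmorph_prod /weight_mnm -mprodXE; apply: eq_bigr => l _.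
by rewrite /mu /= comp_mpolyXU -tnth_nth tnth_mktuple mxvec_funE mpolyXn.
Qed.

Lemma mdeg_weight_mnm j T : mdeg (weight_mnm j T) = (#|T| + #|T :&: S j|)%N.
Proof.
have -> : #|T :&: S j| = (\sum_(l in T) (l \in S j))%N.
  rewrite -sum1_card big_mkcond [RHS]big_mkcond; apply: eq_bigr => l _.
  by rewrite inE; case: (l \in T); case: (l \in S j).
rewrite /weight_mnm mdeg_sum -sum1_card -big_split; apply: eq_bigr => l _.
by rewrite mdegMn mdeg1 mul1n.
Qed.

Lemma weight_mnm_index j' T j l :
  weight_mnm j' T (mxvec_index j l) = (((j' == j) && (l \in T)) * weight j l)%N.
Proof.
rewrite /weight_mnm mnm_sumE.
under eq_bigr do rewrite mulmnE mnm1E eq_mxvec_index.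
have [<- | ne_j] := eqVneq j' j; last by rewrite big1 // => l' _; rewrite andFb mul0n.
have [Tl | Tl] := boolP (l \in T).
  by rewrite (bigD1 l) //= eqxx big1 ?addn0 // => l' /andP[_ /negbTE->].
by rewrite big1 // => l' Tl'; case: eqP Tl => // <-; rewrite Tl'.
Qed.

Lemma lt_mdeg_weight_mnm j j' k :
  j' != j -> (mdeg (weight_mnm j' (E j k)) < mdeg (weight_mnm j (E j k)))%N.
Proof.
move=> ne_j; rewrite !mdeg_weight_mnm ltn_add2l; apply: card_setI_lt.
  by rewrite card_exchange_set //; apply: exchange_set_meet.
by rewrite (eqP (card_E j k)) far_S // eq_sym.
Qed.

Lemma mlead_comp_secant_exchange j k :
  mlead (secant_param r (exchange_dsubset j k) \mPo weight_subst) = weight_mnm j (E j k) /\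
  secant_param r (exchange_dsubset j k) \mPo weight_subst != 0.
Proof.
rewrite comp_secant_param; apply: mlead_sumX_max => j' ne_j.
exact/lt_mdeg_ltmc/lt_mdeg_weight_mnm.
Qed.

Definition secant_exchange_tuple : (r * n).-tuple {mpoly CC[r * n]} :=
  [tuple mxvec_fun (fun j k => secant_param r (exchange_dsubset j k)) i | i < r * n].

Lemma mlead_secant_exchange_index (m : 'X_{1..r * n}) j l :
  (\sum_(i < r * n) mlead (tnth secant_exchange_tuple i \mPo weight_subst) *+ m i)%MM
    (mxvec_index j l) =
  (exchange_weight (S j) (a j) (b j) (fun k => m (mxvec_index j k)) l * weight j l)%N.
Proof.
have mlead_i j' k : mlead (tnth secant_exchange_tuple (mxvec_index j' k) \mPo weight_subst)
    = weight_mnm j' (E j' k).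
  by rewrite tnth_mktuple mxvec_funE; case: (mlead_comp_secant_exchange j' k).
rewrite mnm_sumE big_mxvec_index.
under eq_bigr do under eq_bigr do rewrite mulmnE mlead_i weight_mnm_index.
rewrite (bigD1 j) //= [X in (_ + X)%N]big1 ?addn0 => [|j' ne_j]; last first.
  by apply: big1 => k _; rewrite (negbTE ne_j) mul0n.
rewrite /exchange_weight big_distrl [RHS]big_mkcond /=; apply: eq_bigr => k _.
by rewrite eqxx; case: (l \in E j k); rewrite ?mul0n ?mul1n // mulnC.
Qed.

Lemma alg_indep_secant_exchange : alg_indep secant_exchange_tuple.
Proof.
apply: (comp_mlead_alg_indep (h := weight_subst)) => [i | m m' eq_mm'].
  case/mxvec_indexP: i => j k; rewrite tnth_mktuple mxvec_funE.
  by case: (mlead_comp_secant_exchange j k).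
apply/mnmP => i; case/mxvec_indexP: i => j k.
apply: (exchange_weight_inj (Sa j) (Sb j) (w := fun k => m (mxvec_index j k))
  (w' := fun k => m' (mxvec_index j k))) => l.
have := congr1 (fun mm : 'X_{1..r * n} => mm (mxvec_index j l)) eq_mm'.
by rewrite /= !mlead_secant_exchange_index => /eqP; rewrite eqn_pmul2r // => /eqP.
Qed.

Lemma exists_alg_indep_secant : exists g : (r * n).-tuple {mpoly CC[r * n]},
  (forall i, exists c : dsubset n d, tnth g i = secant_param r c) /\ alg_indep g.
Proof.
exists secant_exchange_tuple; split; last exact: alg_indep_secant_exchange.
by move=> i; case/mxvec_indexP: i => j k; rewrite tnth_mktuple mxvec_funE; eexists.
Qed.

End SecantSpecialization.

Theorem theorem5p8 (n d r : nat) :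
  (1 <= d)%N -> (d < n)%N -> (1 <= r)%N ->
  ((1 + d * (n - d) + 'C(d, 2) * 'C(n - d, 2)) * r <= 'C(n, d))%N ->
  secant_hypersimplex_dim n d r (minn (n * r) 'C(n, d)).-1 /\
  (minn (n * r) 'C(n, d)).-1 = (n * r).-1.
Proof.
move=> d_gt0 lt_dn r_gt0 le_code.
have le_n_beta : (n <= 1 + d * (n - d))%N by nia.
have le_nr : (n * r <= 'C(n, d))%N.
  by apply: leq_trans le_code; rewrite leq_mul2r (leq_trans le_n_beta) ?leq_addr ?orbT.
rewrite (minn_idPl le_nr); split=> //.
rewrite /secant_hypersimplex_dim prednK; last by rewrite muln_gt0 r_gt0 andbT; lia.
rewrite [(n * r)%N]mulnC; have [S [card_S far_S]] := johnson_code_exists le_code.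
have [a Sa] : exists a : 'I_r -> 'I_n, forall j, a j \in S j.
  apply: (fin_all_exists (P := fun j x => x \in S j)) => j.
  by apply/card_gt0P; rewrite card_S.
have [b Sb] : exists b : 'I_r -> 'I_n, forall j, b j \notin S j.
  apply: (fin_all_exists (P := fun j x => x \notin S j)) => j.
  have := cardsC (S j); rewrite card_S card_ord => card_C.
  have /card_gt0P[x] : (0 < #|~: S j|)%N by lia.
  by rewrite inE; exists x.
split; first exact: exists_alg_indep_secant card_S far_S Sa Sb.
by move=> k g _ /alg_indep_size_le.
Qed.
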